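(* Let $S>0$, let $D$ be a finite multiset of items with sizes in $(0,S]$, let $k\ge1$ be an integer and $0<\epsilon\le 1/2$. Call an item large if its size exceeds $\epsilon S$ and small otherwise. Suppose the $k$ copies of all large items are packed into $L$ bins forming a valid partial $k$-times bin packing (each bin of total size at most $S$, no bin containing two copies of the same item). Suppose the $k$ copies of the small items are then inserted one at a time, each into some existing bin in which it fits and which contains no copy of the same item, a new bin being opened only when no such bin exists. Then the total number of bins used is at most $\max\{L,(1+2\epsilon)\,OPT(D_k)+k\}$.
   Context: $D_k$ is the collection of $k$ copies of each item of $D$. A $k$-times bin packing of $D$ assigns all copies in $D_k$ to bins such that each bin has total size at most $S$ and no bin contains two copies of the same item; $OPT(D_k)$ is the minimum number of bins in such a packing. *)

From HB Require Import structures.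
From mathcomp Require Import all_boot all_order all_algebra.
Set Implicit Arguments. Unset Strict Implicit. Unset Printing Implicit Defensive.
Import Order.TTheory GRing.Theory Num.Theory.
Local Open Scope ring_scope.

(* Items of D are indexed by 'I_n with sizes s : 'I_n -> R.
   Since no bin may contain two copies of the same item, a bin is
   represented by the set of items it contains; a (partial) packing is a
   sequence of bins. *)

Section Defs.
Variables (R : realFieldType) (n : nat) (s : 'I_n -> R).

Definition load (b : {set 'I_n}) : R := \sum_(i in b) s i.

Definition copies (P : seq {set 'I_n}) (i : 'I_n) : nat :=
  count (fun b : {set 'I_n} => i \in b) P.

Definition kpacking (S : R) (k : nat) (P : seq {set 'I_n}) : bool :=
  all (fun b : {set 'I_n} => load b <= S) P && [forall i, copies P i == k].

Definition kfeasible (S : R) (k m : nat) : bool :=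
  [exists t : m.-tuple {set 'I_n}, kpacking S k t].

(* OPT(D_k): the minimum number of bins of a k-times packing.  When all
   sizes are <= S, n*k bins (singletons) always suffice, so the minimum is
   attained within 0..n*k. *)
Definition OPTk (S : R) (k : nat) : nat :=
  \big[minn/(n * k)%N]_(m < (n * k).+1 | kfeasible S k m) m.

Definition insert_step (S : R) (B : seq {set 'I_n}) (i : 'I_n)
    (B' : seq {set 'I_n}) : Prop :=
  (exists2 j : nat, (j < size B)%N &
     [/\ i \notin nth set0 B j, load (nth set0 B j) + s i <= S &
         B' = set_nth set0 B j (i |: nth set0 B j)])
  \/
  ((forall j : nat, (j < size B)%N ->
      (i \in nth set0 B j) \/ S < load (nth set0 B j) + s i)
   /\ B' = rcons B [set i]).

Inductive insert_run (S : R) : seq {set 'I_n} -> seq 'I_n -> seq {set 'I_n} -> Prop :=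
| run_nil B : insert_run S B [::] B
| run_cons B i B1 ord B2 :
    insert_step S B i B1 -> insert_run S B1 ord B2 -> insert_run S B (i :: ord) B2.

End Defs.

From HB Require Import structures.
From mathcomp Require Import all_boot all_order all_algebra.
From mathcomp Require Import zify lra.
Import Order.TTheory GRing.Theory Num.Theory.
Local Open Scope ring_scope.

(* A new bin is opened for a small item i only when every existing bin either
   already holds a copy of i (fewer than k bins, as a copy of i is still
   unplaced) or is filled beyond S - s i >= (1 - eps) S.  Every item has at
   most k copies in the bins, so their total load is at most
   k * \sum_i s i <= OPT(D_k) * S, and there are at most
   OPT(D_k) / (1 - eps) <= (1 + 2 eps) OPT(D_k) bins of the second kind.
   Thus each newly opened bin respects the bound, and if no bin is ever
   opened the packing keeps its initial L bins. *)

Lemma ler_1D2e_mul (R : realFieldType) (e x y : R) :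
  0 <= e <= 2^-1 -> 0 <= x -> x * (1 - e) <= y -> x <= (1 + 2 * e) * y.
Proof.
move=> /andP[e_ge0 e_le_half] x_ge0 le_xy.
have le_2e1 : 2 * e <= 1.
  by rewrite -(ler_pM2l (ltr0n R 2)) mulfV ?pnatr_eq0 // in e_le_half.
have : 0 <= e * (1 - 2 * e) * x by rewrite !mulr_ge0 // subr_ge0.
have : 0 <= (1 + 2 * e) * (y - x * (1 - e)) by rewrite mulr_ge0 ?subr_ge0 //; lra.
nra.
Qed.

Section InsertionBound.
Set Implicit Arguments. Unset Strict Implicit.

Variables (R : realFieldType) (n : nat) (s : 'I_n -> R).

Lemma copies_set_nth (B : seq {set 'I_n}) (j : nat) (i x : 'I_n) :
  (j < size B)%N -> i \notin nth set0 B j ->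
  copies (set_nth set0 B j (i |: nth set0 B j)) x = (copies B x + (x == i))%N.
Proof.
move=> lt_j_B i_notin; rewrite /copies count_set_nth_ltn //= in_setU1.
by case: eqP => [->|_]; rewrite ?(negbTE i_notin) /= ?subn0 ?addnK ?addn0.
Qed.

Lemma copies_rcons (B : seq {set 'I_n}) (i x : 'I_n) :
  copies (rcons B [set i]) x = (copies B x + (x == i))%N.
Proof. by rewrite /copies -cats1 count_cat /= in_set1 addn0. Qed.

Lemma insert_step_copies (S : R) (B B' : seq {set 'I_n}) (i x : 'I_n) :
  insert_step s S B i B' -> copies B' x = (copies B x + (x == i))%N.
Proof.
case=> [[j lt_j_B [i_notin _ ->]] | [_ ->]]; first exact: copies_set_nth.
exact: copies_rcons.
Qed.

Lemma sum_load_copies (P : seq {set 'I_n}) :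
  \sum_(b <- P) load s b = \sum_(i < n) (copies P i)%:R * s i.
Proof.
elim: P => [|b P IH]; first by rewrite big_nil; apply/esym/big1 => i _; rewrite mul0r.
rewrite big_cons IH /load big_mkcond -big_split /=; apply: eq_bigr => i _.
by rewrite /copies /= natrD mulrDl; case: (i \in b); rewrite ?mul1r ?mul0r.
Qed.

Lemma sum_load_le_size (S : R) (P : seq {set 'I_n}) :
  all (fun b : {set 'I_n} => load s b <= S) P ->
  \sum_(b <- P) load s b <= (size P)%:R * S.
Proof.
elim: P => [|b P IH] /=; first by rewrite big_nil mul0r.
case/andP=> le_bS /IH le_PS.
by rewrite big_cons -addn1 natrD mulrDl mul1r addrC lerD.
Qed.

Lemma sum_load_le_copies (k : nat) (P : seq {set 'I_n}) :
  (forall i, 0 <= s i) -> (forall i, copies P i <= k)%N ->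
  \sum_(b <- P) load s b <= k%:R * \sum_(i < n) s i.
Proof.
move=> s_ge0 le_copies; rewrite sum_load_copies mulr_sumr.
by apply: ler_sum => i _; rewrite ler_wpM2r ?ler_nat.
Qed.

Lemma OPTk_lb (S : R) (k : nat) :
  (forall i, s i <= S) -> k%:R * \sum_(i < n) s i <= (OPTk s S k)%:R * S.
Proof.
move=> le_sS; rewrite /OPTk.
apply: (big_ind (fun m : nat => k%:R * \sum_(i < n) s i <= m%:R * S)).
- have le_sum : \sum_(i < n) s i <= n%:R * S.
    by rewrite mulr_natl -[X in S *+ X]card_ord -sumr_const; apply: ler_sum.
  by rewrite mulnC natrM -mulrA ler_wpM2l.
- by move=> x y le_x le_y; rewrite /minn; case: ltnP.
move=> m /existsP[t /andP[loads_le /forallP copies_k]].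
have -> : k%:R * \sum_(i < n) s i = \sum_(b <- t) load s b.
  by rewrite sum_load_copies mulr_sumr; apply: eq_bigr => i _; rewrite (eqP (copies_k i)).
by rewrite -[X in X%:R * S](size_tuple t) sum_load_le_size.
Qed.

Lemma count_notin_load (S : R) (B : seq {set 'I_n}) (i : 'I_n) :
  (forall j, 0 <= s j) ->
  (forall b, b \in B -> i \in b \/ S < load s b + s i) ->
  (count (fun b : {set 'I_n} => i \notin b) B)%:R * (S - s i)
    <= \sum_(b <- B) load s b.
Proof.
move=> s_ge0; elim: B => [|b B IH] blocked /=; first by rewrite big_nil mul0r.
rewrite big_cons natrD mulrDl lerD ?IH //; last first.
  by move=> b' b'_in; apply: blocked; rewrite inE b'_in orbT.
have load_ge0 : 0 <= load s b by apply: sumr_ge0.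
case: (blocked b (mem_head b B)) => [-> | overflow]; first by rewrite mul0r.
by case: (i \in b); rewrite ?mul0r ?mul1r // lerBlDr ltW.
Qed.

Lemma new_bin_bound (S eps : R) (k : nat) (B : seq {set 'I_n}) (i : 'I_n) :
  0 < S -> (forall j, 0 <= s j <= S) -> 0 <= eps <= 2^-1 -> s i <= eps * S ->
  (forall b, b \in B -> i \in b \/ S < load s b + s i) ->
  (copies B i < k)%N -> (forall j, copies B j <= k)%N ->
  (size B).+1%:R <= (1 + 2 * eps) * (OPTk s S k)%:R + k%:R.
Proof.
move=> S_gt0 s_bounds eps_bounds small_i blocked lt_copies_i le_copies.
have s_ge0 j : 0 <= s j by case/andP: (s_bounds j).
set c := count (fun b : {set 'I_n} => i \notin b) B.
have size_B : size B = (copies B i + c)%N.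
  by rewrite -(count_predC (fun b : {set 'I_n} => i \in b) B).
have overflowing_le_OPT : c%:R * (1 - eps) <= (OPTk s S k)%:R.
  have le_sS j : s j <= S by case/andP: (s_bounds j).
  have load_le_OPT := le_trans (count_notin_load s_ge0 blocked)
    (le_trans (sum_load_le_copies s_ge0 le_copies) (OPTk_lb k le_sS)).
  rewrite -(ler_pM2r S_gt0) -mulrA; apply: le_trans load_le_OPT.
  by rewrite ler_wpM2l // mulrBl mul1r lerD2l lerN2.
apply: (@le_trans _ _ (k + c)%N%:R); first by rewrite ler_nat size_B; lia.
by rewrite natrD addrC lerD2r ler_1D2e_mul.
Qed.

Lemma insert_run_size (S eps : R) (k : nat) (B1 B2 : seq {set 'I_n}) (ord : seq 'I_n) :
  0 < S -> (forall j, 0 <= s j <= S) -> 0 <= eps <= 2^-1 ->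
  insert_run s S B1 ord B2 ->
  (forall j, copies B1 j + count_mem j ord <= k)%N ->
  (forall j, j \in ord -> s j <= eps * S) ->
  (size B2)%:R <= Num.max (size B1)%:R ((1 + 2 * eps) * (OPTk s S k)%:R + k%:R).
Proof.
move=> S_gt0 s_bounds eps_bounds.
elim=> {B1 ord B2} [B | B i B1 ord B2 step _ IH] copies_le small; first by rewrite le_max lexx.
have copies_B1_le j : (copies B1 j + count_mem j ord <= k)%N.
  by move: (copies_le j); rewrite (insert_step_copies j step) /= eq_sym; lia.
have := IH copies_B1_le (fun j j_in => small j (mem_behead (s := i :: ord) j_in)).
case: step => [[j lt_j_B [_ _ ->]] | [blocked ->]].
  by rewrite size_set_nth (maxn_idPr lt_j_B).
rewrite size_rcons => /le_trans; apply; rewrite ge_max !le_max lexx orbT andbT.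
rewrite (new_bin_bound S_gt0 s_bounds eps_bounds (small i (mem_head i ord))) ?orbT //.
- by move=> b b_in; rewrite -(nth_index set0 b_in); apply: blocked; rewrite index_mem.
- by move: (copies_le i); rewrite /= eqxx; lia.
- by move=> j; move: (copies_le j); lia.
Qed.

End InsertionBound.

Theorem lemma4 (R : realFieldType) (S : R) (n : nat) (s : 'I_n -> R)
    (k : nat) (eps : R)
    (B0 : seq {set 'I_n}) (ord : seq 'I_n) (B : seq {set 'I_n}) :
  0 < S ->
  (forall i, 0 < s i <= S) ->
  (0 < k)%N ->
  0 < eps <= 2^-1 ->
  (* B0: valid partial k-times packing of exactly the large items *)
  all (fun b : {set 'I_n} => load s b <= S) B0 ->
  (forall i, copies B0 i = (if eps * S < s i then k else 0%N)) ->
  (* ord: insertion order of the k copies of each small item *)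
  (forall i, count_mem i ord = (if eps * S < s i then 0%N else k)) ->
  insert_run s S B0 ord B ->
  (size B)%:R <= Num.max (size B0)%:R
                         ((1 + 2 * eps) * (OPTk s S k)%:R + k%:R).
Proof.
move=> S_gt0 s_bounds _ eps_bounds _ copies_B0 count_ord run.
have s_bounds' j : 0 <= s j <= S by case/andP: (s_bounds j) => /ltW -> ->.
have eps_bounds' : 0 <= eps <= 2^-1 by case/andP: eps_bounds => /ltW -> ->.
apply: (insert_run_size S_gt0 s_bounds' eps_bounds' run).
  by move=> j; rewrite copies_B0 count_ord; case: ifP; lia.
move=> j j_in; rewrite leNgt; apply/negP => large_j.
by move: (count_ord j); rewrite large_j => /count_memPn; rewrite j_in.
Qed.
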